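(* Let $\hbar,m_0,c>0$, put $E_0=m_0c^2$ and $l_0=\frac{\hbar}{m_0c}$. Let $f_n\in\mathbb{C}$ be arbitrary constants, indexed by the positive integers $n$ with $n l_0<1$, and define for $x,t\in\mathbb{R}$ $$ Y(x,t)=\exp\left(-\frac{iE_0t}{\hbar}\right)\sum_{\substack{n\geq 1\\ n l_0<1}}f_n\exp\left(i\frac{E_0l_0^2n^2 t}{2\hbar\sqrt{\left|l_0^2n^2-1\right|}}\right)e^{-nx}. $$ Then $Y$ satisfies $$ i\hbar\frac{\partial Y}{\partial t}=E_0Y+\frac{E_0}{2}\sum^{\infty}_{n=0}(-1)^{n+1}\binom{-1/2}{n}\left(\frac{\hbar}{m_0c}\right)^{2n+2}\frac{\partial^{2n+2}Y}{\partial x^{2n+2}} $$ for all $x,t\in\mathbb{R}$ (the series on the right converging), and $Y(x,0)=\sum_{n\geq1,\,nl_0<1}f_ne^{-nx}$.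
   Context: $\binom{-1/2}{n}=\frac{(-1/2)(-3/2)\cdots(-1/2-n+1)}{n!}$ denotes the generalized binomial coefficient. The quantity $l_0$ is called the Compton wavelength of the particle. *)

From Stdlib Require Import Reals.
From Coquelicot Require Import Coquelicot.
Open Scope R_scope.

Definition Cexp (z : C) : C :=
  (exp (Re z) * cos (Im z), exp (Re z) * sin (Im z)).

Definition is_derive_RC (f : R -> C) (x : R) (l : C) : Prop :=
  @is_derive R_AbsRing C_R_NormedModule f x l.

Inductive nth_deriv (f : R -> C) : nat -> (R -> C) -> Prop :=
| nth_deriv_O : nth_deriv f 0 f
| nth_deriv_S : forall k g h,
    nth_deriv f k g -> (forall x, is_derive_RC g x (h x)) ->
    nth_deriv f (S k) h.

Fixpoint gbinom (a : R) (n : nat) : R :=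
  match n with
  | O => 1
  | S k => gbinom a k * (a - INR k) / INR (S k)
  end.

Definition admissible (l0 : R) (n : nat) : bool :=
  (1 <=? n)%nat && (if Rlt_dec (INR n * l0) 1 then true else false).

(* a bound N with every admissible n <= N (for l0 > 0) *)
Definition idx_bound (l0 : R) : nat := Z.to_nat (up (/ l0)).

Definition adm_sum (l0 : R) (F : nat -> C) : C :=
  sum_n (fun n => if admissible l0 n then F n else RtoC 0) (idx_bound l0).

Definition Ysol (hbar m0 c : R) (f : nat -> C) (x t : R) : C :=
  let E0 := m0 * c ^ 2 in
  let l0 := hbar / (m0 * c) in
  (Cexp (0%R, (- (E0 * t / hbar))%R) *
   adm_sum l0 (fun n =>
     f n * Cexp (0%R, (E0 * l0 ^ 2 * INR n ^ 2 * t
                     / (2 * hbar * sqrt (Rabs (l0 ^ 2 * INR n ^ 2 - 1))))%R)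
         * RtoC (exp (- INR n * x)%R)))%C.

From Stdlib Require Import Reals Lra Lia.
From Coquelicot Require Import Coquelicot.
Open Scope R_scope.

(* Y is a finite superposition of modes e^(-nx) e^(i w_n t), and d^(2k+2)/dx^(2k+2)
   acts on the n-th mode as multiplication by n^(2k+2).  With u = l0^2 n^2 < 1 the
   right-hand side therefore multiplies that mode by
     E0 + (E0/2) sum_k (-1)^(k+1) binom(-1/2,k) u^(k+1) = E0 - E0 u / (2 sqrt (1 - u)),
   by the binomial series for (1 - u)^(-1/2), and this is exactly -hbar w_n.
   The binomial series itself is obtained from the recursion
   (k + 1) a_(k+1) = (k + 1/2) a_k of its coefficients: their power series P
   solves 2 (1 - v) P' = P, so P^2 (1 - v) is constant, equal to 1. *)

Definition invsqrt_coef (k : nat) : R := gbinom (-1/2) k * (-1) ^ k.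

Lemma invsqrt_coef_S k :
  invsqrt_coef (S k) = invsqrt_coef k * (INR k + /2) / INR (S k).
Proof.
  unfold invsqrt_coef; cbn [gbinom pow].
  field; apply not_0_INR; lia.
Qed.

Lemma invsqrt_coef_bound k : 0 < invsqrt_coef k <= 1.
Proof.
  induction k as [|k IHk]; [unfold invsqrt_coef; simpl; lra|].
  rewrite invsqrt_coef_S, S_INR.
  pose proof (pos_INR k).
  assert (Hq : 0 < (INR k + /2) / (INR k + 1) <= 1).
  { split; [apply Rdiv_lt_0_compat; lra|].
    apply Rmult_le_reg_r with (INR k + 1); [lra|].
    unfold Rdiv; rewrite Rmult_assoc, Rinv_l by lra; lra. }
  unfold Rdiv in *; rewrite Rmult_assoc.
  destruct IHk, Hq; split; nra.
Qed.

Lemma CV_radius_invsqrt_coef v :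
  Rabs v < 1 -> Rbar_lt (Rabs v) (CV_radius invsqrt_coef).
Proof.
  intros Hv.
  set (r := (Rabs v + 1) / 2).
  assert (Hr : 0 <= r <= 1) by (pose proof (Rabs_pos v); unfold r; lra).
  assert (Hle : Rbar_le r (CV_radius invsqrt_coef)).
  { apply (proj1 (CV_radius_bounded invsqrt_coef)).
    exists 1; intros n.
    pose proof (invsqrt_coef_bound n).
    pose proof (pow_le r n (proj1 Hr)).
    pose proof (pow_incr r 1 n Hr) as Hrn; rewrite pow1 in Hrn.
    rewrite Rabs_pos_eq by nra; nra. }
  destruct (CV_radius invsqrt_coef) as [R| |]; simpl in *; try easy.
  unfold r in Hle; lra.
Qed.

Lemma invsqrt_coef_derive k :
  2 * (PS_derive invsqrt_coef k - PS_incr_1 (PS_derive invsqrt_coef) k)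
  = invsqrt_coef k.
Proof.
  unfold PS_derive; destruct k as [|k]; cbn [PS_incr_1].
  - rewrite (invsqrt_coef_S 0); change zero with 0; simpl; field.
  - rewrite (invsqrt_coef_S (S k)), !S_INR.
    field; pose proof (pos_INR k); lra.
Qed.

Lemma PSeries_invsqrt_coef_ode v :
  Rabs v < 1 ->
  PSeries invsqrt_coef v = 2 * (1 - v) * PSeries (PS_derive invsqrt_coef) v.
Proof.
  intros Hv.
  set (P' := PSeries (PS_derive invsqrt_coef) v).
  assert (HP' : is_pseries (PS_derive invsqrt_coef) v P').
  { apply PSeries_correct, ex_pseries_derive, CV_radius_invsqrt_coef, Hv. }
  assert (Hdiff := is_pseries_minus _ _ _ _ _ HP' (is_pseries_incr_1 _ _ _ HP')).
  assert (Hsc := is_pseries_scal 2 _ _ _ (Rmult_comm _ _) Hdiff).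
  replace (2 * (1 - v) * P') with (scal 2 (plus P' (opp (scal v P'))))
    by (change (2 * (P' + - (v * P')) = 2 * (1 - v) * P'); ring).
  apply is_pseries_unique; revert Hsc; apply is_pseries_ext.
  intros k; apply invsqrt_coef_derive.
Qed.

Lemma PSeries_invsqrt_coef_sqr u :
  Rabs u < 1 -> PSeries invsqrt_coef u ^ 2 * (1 - u) = 1.
Proof.
  intros Hu.
  set (g := fun w => PSeries invsqrt_coef w ^ 2 * (1 - w)).
  assert (Hg' : forall w, Rabs w < 1 -> is_derive g w 0).
  { intros w Hw.
    assert (HP := is_derive_PSeries _ _ (CV_radius_invsqrt_coef w Hw)).
    replace 0 with (INR 2 * PSeries (PS_derive invsqrt_coef) w
                      * PSeries invsqrt_coef w ^ 1 * (1 - w)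
                    + PSeries invsqrt_coef w ^ 2 * (-1))
      by (rewrite (PSeries_invsqrt_coef_ode w Hw); simpl; ring).
    apply (is_derive_mult (fun w => PSeries invsqrt_coef w ^ 2) (fun w => 1 - w));
      [now apply is_derive_pow | auto_derive; auto; ring | apply Rmult_comm]. }
  assert (Hint : forall x, Rmin 0 u <= x <= Rmax 0 u -> Rabs x < 1).
  { intros x Hx; unfold Rmin, Rmax in Hx; destruct (Rle_dec 0 u);
      apply Rabs_def2 in Hu; apply Rabs_def1; lra. }
  destruct (MVT_gen g 0 u (fun _ => 0)) as [w [_ Hw]].
  - intros x Hx; apply Hg', Hint; lra.
  - intros x Hx; apply continuity_pt_filterlim, (ex_derive_continuous g).
    exists 0; apply Hg', Hint, Hx.
  - assert (Hgu : g u = g 0) by lra.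
    unfold g in Hgu; rewrite Hgu, PSeries_0; unfold invsqrt_coef; simpl; ring.
Qed.

Lemma is_pseries_invsqrt_coef u :
  0 <= u < 1 -> is_pseries invsqrt_coef u (/ sqrt (1 - u)).
Proof.
  intros Hu.
  assert (Hu' : Rabs u < 1) by (rewrite Rabs_pos_eq; lra).
  assert (Hpos : 0 <= PSeries invsqrt_coef u).
  { rewrite <- (PSeries_const_0 u); unfold PSeries; apply Series_le.
    - intros n; rewrite Rmult_0_l; split; [lra|].
      pose proof (invsqrt_coef_bound n); pose proof (pow_le u n (proj1 Hu)).
      change (scal (pow_n u n) (invsqrt_coef n)) with (u ^ n * invsqrt_coef n).
      nra.
    - apply ex_pseries_R, CV_radius_inside, CV_radius_invsqrt_coef, Hu'. }
  pose proof (PSeries_invsqrt_coef_sqr u Hu') as Hsqr.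
  replace (/ sqrt (1 - u)) with (PSeries invsqrt_coef u).
  - apply PSeries_correct, CV_radius_inside, CV_radius_invsqrt_coef, Hu'.
  - rewrite <- sqrt_inv, <- (sqrt_pow2 (PSeries invsqrt_coef u)) by exact Hpos.
    f_equal; field_simplify_eq; lra.
Qed.

Lemma is_series_gbinom_mhalf_shift u :
  0 <= u < 1 ->
  is_series (fun k => (-1) ^ (k + 1) * gbinom (-1/2) k * u ^ (k + 1))
    (- u / sqrt (1 - u)).
Proof.
  intros Hu.
  assert (H := is_series_scal_l (- u) _ _
                 (proj1 (is_pseries_R _ _ _) (is_pseries_invsqrt_coef u Hu))).
  replace (- u / sqrt (1 - u)) with (scal (- u) (/ sqrt (1 - u)))
    by (change (- u * / sqrt (1 - u) = - u / sqrt (1 - u)); reflexivity).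
  revert H; apply is_series_ext; intros k.
  change (- u * (invsqrt_coef k * u ^ k) = (-1) ^ (k + 1) * gbinom (-1/2) k * u ^ (k + 1)).
  unfold invsqrt_coef; rewrite !pow_add; ring.
Qed.

Lemma is_series_zero {K : AbsRing} {V : NormedModule K} :
  is_series (fun _ : nat => @zero V) zero.
Proof.
  unfold is_series; eapply filterlim_ext; [|apply filterlim_const].
  intros n; symmetry; apply sum_n_m_const_zero.
Qed.

Lemma is_series_sum_n {K : AbsRing} {V : NormedModule K}
    (A : nat -> nat -> V) (L : nat -> V) (N : nat) :
  (forall n, (n <= N)%nat -> is_series (fun k => A k n) (L n)) ->
  is_series (fun k => sum_n (A k) N) (sum_n L N).
Proof.
  induction N as [|N IHN]; intros HA.
  - rewrite sum_O; eapply is_series_ext; [|apply (HA 0%nat), le_n].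
    intros k; now rewrite sum_O.
  - rewrite sum_Sn; eapply is_series_ext;
      [|apply is_series_plus; [apply IHN; intros n Hn; apply HA; lia | apply HA, le_n]].
    intros k; now rewrite sum_Sn.
Qed.

Lemma is_series_scal_r_vec {V : NormedModule R_AbsRing} (a : nat -> R) (l : R) (v : V) :
  is_series a l -> is_series (fun k => scal (a k) v) (scal l v).
Proof.
  intros Ha; unfold is_series.
  eapply filterlim_ext;
    [|eapply filterlim_comp; [exact Ha | apply (filterlim_scal_l (K := R_AbsRing) l v)]].
  intros n; induction n as [|n IHn].
  - now rewrite !sum_O.
  - rewrite !sum_Sn, <- IHn; exact (scal_distr_r (K := R_AbsRing) (sum_n a n) (a (S n)) v).
Qed.

Lemma adm_sum_ext l0 F G :
  (forall n, admissible l0 n = true -> F n = G n) -> adm_sum l0 F = adm_sum l0 G.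
Proof.
  intros H; apply sum_n_ext; intros n.
  destruct (admissible l0 n) eqn:Hadm; auto.
Qed.

Lemma adm_sum_mult_l l0 (a : C) F :
  (a * adm_sum l0 F)%C = adm_sum l0 (fun n => a * F n)%C.
Proof.
  unfold adm_sum; rewrite <- (sum_n_mult_l (K := C_Ring)); apply sum_n_ext; intros n.
  destruct (admissible l0 n); [reflexivity | apply Cmult_0_r].
Qed.

Lemma adm_sum_plus l0 F G :
  (adm_sum l0 F + adm_sum l0 G)%C = adm_sum l0 (fun n => F n + G n)%C.
Proof.
  unfold adm_sum; rewrite <- (sum_n_plus (G := C_AbelianMonoid)); apply sum_n_ext; intros n.
  destruct (admissible l0 n); [reflexivity | apply Cplus_0_r].
Qed.

Lemma is_derive_adm_sum l0 (F : nat -> R -> C) (dF : nat -> C) t :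
  (forall n, admissible l0 n = true -> is_derive_RC (F n) t (dF n)) ->
  is_derive_RC (fun s => adm_sum l0 (fun n => F n s)) t (adm_sum l0 dF).
Proof.
  intros H; unfold is_derive_RC, adm_sum.
  apply (is_derive_sum_n (V := C_R_NormedModule)); intros n _.
  destruct (admissible l0 n) eqn:Hadm;
    [now apply H | apply (is_derive_const (V := C_R_NormedModule))].
Qed.

Lemma is_series_adm_sum l0 (A : nat -> nat -> C) (L : nat -> C) :
  (forall n, admissible l0 n = true -> is_series (fun k => A k n) (L n)) ->
  is_series (fun k => adm_sum l0 (A k)) (adm_sum l0 L).
Proof.
  intros H; unfold adm_sum; apply (is_series_sum_n (V := C_NormedModule)); intros n _.
  destruct (admissible l0 n) eqn:Hadm;
    [now apply H | apply (is_series_zero (V := C_NormedModule))].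
Qed.

Lemma admissible_sqr_lt_1 l0 n :
  0 <= l0 -> admissible l0 n = true -> 0 <= l0 ^ 2 * INR n ^ 2 < 1.
Proof.
  unfold admissible; intros Hl H; apply andb_prop in H as [_ H].
  destruct (Rlt_dec (INR n * l0) 1) as [Hlt|]; [|discriminate].
  pose proof (pos_INR n); assert (0 <= INR n * l0) by nra.
  split; nra.
Qed.

Lemma scal_R_C (r : R) (v : C) : @scal R_AbsRing C_R_NormedModule r v = (RtoC r * v)%C.
Proof.
  destruct v as [v1 v2]; unfold Cmult, RtoC; simpl.
  change (scal r (v1, v2)) with (r * v1, r * v2); f_equal; ring.
Qed.

Lemma is_series_RtoC_mult_r (a : nat -> R) (l : R) (v : C) :
  is_series a l -> is_series (V := C_NormedModule) (fun k => RtoC (a k) * v)%C (RtoC l * v)%C.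
Proof.
  intros Ha; rewrite <- scal_R_C.
  eapply is_series_ext; [intros k; apply scal_R_C|].
  exact (is_series_scal_r_vec (V := C_R_NormedModule) a l v Ha).
Qed.

Lemma is_derive_RC_scal (phi : R -> R) (phi' t : R) (v : C) :
  is_derive phi t phi' ->
  is_derive_RC (fun s => RtoC (phi s) * v)%C t (RtoC phi' * v)%C.
Proof.
  intros H; unfold is_derive_RC; rewrite <- scal_R_C.
  eapply is_derive_ext; [intros s; apply scal_R_C|].
  exact (is_derive_scal_l (V := C_R_NormedModule) phi t phi' v H).
Qed.

Lemma Ci_mul_Ci : (Ci * Ci)%C = RtoC (-1).
Proof. unfold Ci, Cmult, RtoC; simpl; f_equal; ring. Qed.

Lemma Cexp_imag_plus a b :
  (Cexp (0, a) * Cexp (0, b))%C = Cexp (0, a + b).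
Proof.
  unfold Cexp, Cmult; simpl; rewrite exp_0, cos_plus, sin_plus; f_equal; ring.
Qed.

Lemma Cexp_imag_0 : Cexp (0, 0) = 1%C.
Proof. unfold Cexp, RtoC; simpl; rewrite exp_0, cos_0, sin_0; f_equal; ring. Qed.

Lemma Cexp_imag_mult_decomp (a : R) (v : C) :
  (Cexp (0, a) * v = RtoC (cos a) * v + RtoC (sin a) * (Ci * v))%C.
Proof.
  destruct v as [v1 v2]; unfold Cexp, Cmult, Cplus, RtoC, Ci; simpl.
  rewrite exp_0; f_equal; ring.
Qed.

Lemma is_derive_RC_Cexp_imag_mult (w t : R) (v : C) :
  is_derive_RC (fun s => Cexp (0, (w * s)%R) * v)%C t
    (Ci * RtoC w * (Cexp (0, (w * t)%R) * v))%C.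
Proof.
  unfold is_derive_RC.
  eapply is_derive_ext; [intros s; symmetry; apply Cexp_imag_mult_decomp|].
  replace (Ci * RtoC w * (Cexp (0, (w * t)%R) * v))%C
    with (RtoC (- sin (w * t) * w) * v + RtoC (cos (w * t) * w) * (Ci * v))%C.
  - apply (is_derive_plus (V := C_R_NormedModule));
      apply is_derive_RC_scal; auto_derive; auto; ring.
  - destruct v as [v1 v2]; unfold Cexp, Cmult, Cplus, RtoC, Ci; simpl.
    rewrite exp_0; f_equal; ring.
Qed.

(* [nth_deriv g 0] only admits [g] itself, hence the new witness [D']. *)
Lemma nth_deriv_chain (g : R -> C) (D : nat -> R -> C) :
  (forall y, g y = D 0%nat y) ->
  (forall k y, is_derive_RC (D k) y (D (S k) y)) ->
  exists D', (forall k, nth_deriv g k (D' k)) /\ (forall k y, D' k y = D k y).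
Proof.
  intros H0 HS.
  exists (fun k => match k with O => g | S _ => D k end); split.
  - intros k; induction k as [|k IHk]; [constructor|].
    apply (nth_deriv_S g k _ _ IHk); intros y; destruct k as [|k].
    + eapply is_derive_ext; [intros s; symmetry; apply H0|]; apply HS.
    + apply HS.
  - intros [|k] y; [apply H0 | reflexivity].
Qed.

Section Ysol_modes.

Variables (hbar m0 c : R) (f : nat -> C).
Hypotheses (Hhbar : 0 < hbar) (Hm0 : 0 < m0) (Hc : 0 < c).

Local Notation E0 := (m0 * c ^ 2).
Local Notation l0 := (hbar / (m0 * c)).

Definition mode_freq (n : nat) : R :=
  - (E0 / hbar)
  + E0 * l0 ^ 2 * INR n ^ 2 / (2 * hbar * sqrt (Rabs (l0 ^ 2 * INR n ^ 2 - 1))).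

Definition mode (n : nat) (x t : R) : C :=
  (Cexp (0, (mode_freq n * t)%R) * f n * RtoC (exp (- INR n * x)))%C.

Lemma Ysol_mode_sum x t : Ysol hbar m0 c f x t = adm_sum l0 (fun n => mode n x t).
Proof.
  unfold Ysol; rewrite adm_sum_mult_l; apply adm_sum_ext; intros n _.
  unfold mode; match goal with
  | |- (Cexp (0, ?a) * (_ * Cexp (0, ?b) * _))%C = _ =>
      replace (mode_freq n * t)%R with (a + b)%R by (unfold mode_freq, Rdiv; ring)
  end.
  rewrite <- Cexp_imag_plus; ring.
Qed.

Lemma is_derive_mode_t n x t :
  is_derive_RC (fun s => mode n x s) t (Ci * RtoC (mode_freq n) * mode n x t)%C.
Proof.
  unfold mode.
  replace (Ci * _ * _)%C with (Ci * RtoC (mode_freq n)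
    * (Cexp (0, (mode_freq n * t)%R) * (f n * RtoC (exp (- INR n * x)))))%C by ring.
  eapply is_derive_ext; [intros s; apply Cmult_assoc|].
  apply is_derive_RC_Cexp_imag_mult.
Qed.

Lemma is_derive_mode_x n k x t :
  is_derive_RC (fun y => RtoC ((- INR n) ^ k) * mode n y t)%C x
    (RtoC ((- INR n) ^ S k) * mode n x t)%C.
Proof.
  set (v := (Cexp (0, (mode_freq n * t)%R) * f n)%C).
  assert (Hmode : forall j y, (RtoC ((- INR n) ^ j) * mode n y t)%C
                              = (RtoC ((- INR n) ^ j * exp (- INR n * y)) * v)%C)
    by (intros j y; unfold mode, v; rewrite RtoC_mult; ring).
  rewrite Hmode; eapply is_derive_ext; [intros y; symmetry; apply Hmode|].
  apply is_derive_RC_scal; auto_derive; auto; simpl; ring.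
Qed.

Lemma mode_dispersion n :
  admissible l0 n = true ->
  is_series (fun k => E0 / 2 * (-1) ^ (k + 1) * gbinom (-1/2) k * l0 ^ (2 * k + 2)
                      * (- INR n) ^ (2 * k + 2))
    (- hbar * mode_freq n - E0).
Proof.
  intros Hn.
  assert (Hl0 : 0 <= l0) by (apply Rlt_le, Rdiv_lt_0_compat; nra).
  pose proof (admissible_sqr_lt_1 _ _ Hl0 Hn) as Hu.
  set (u := l0 ^ 2 * INR n ^ 2) in *.
  assert (H := is_series_scal_l (E0 / 2) _ _ (is_series_gbinom_mhalf_shift u Hu)).
  replace (- hbar * mode_freq n - E0) with (scal (E0 / 2) (- u / sqrt (1 - u))).
  - revert H; apply is_series_ext; intros k.
    change (E0 / 2 * ((-1) ^ (k + 1) * gbinom (-1/2) k * u ^ (k + 1))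
            = E0 / 2 * (-1) ^ (k + 1) * gbinom (-1/2) k * l0 ^ (2 * k + 2)
              * (- INR n) ^ (2 * k + 2)).
    replace (2 * k + 2)%nat with (2 * (k + 1))%nat by lia.
    unfold u; rewrite !pow_mult, Rpow_mult_distr.
    replace ((- INR n) ^ 2) with (INR n ^ 2) by ring; ring.
  - assert (Hsqrt : 0 < sqrt (1 - u)) by (apply sqrt_lt_R0; lra).
    change (E0 / 2 * (- u / sqrt (1 - u)) = - hbar * mode_freq n - E0).
    unfold mode_freq; fold u; rewrite Rabs_left by lra.
    replace (- (u - 1)) with (1 - u) by ring.
    replace (E0 * l0 ^ 2 * INR n ^ 2) with (E0 * u) by (unfold u; ring).
    field; split; lra.
Qed.

Definition Ysol_dt (x t : R) : C :=
  adm_sum l0 (fun n => Ci * RtoC (mode_freq n) * mode n x t)%C.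

Definition Ysol_dx (k : nat) (x t : R) : C :=
  adm_sum l0 (fun n => RtoC ((- INR n) ^ k) * mode n x t)%C.

Lemma is_derive_Ysol_t x t :
  is_derive_RC (fun s => Ysol hbar m0 c f x s) t (Ysol_dt x t).
Proof.
  eapply is_derive_ext; [intros s; symmetry; apply Ysol_mode_sum|].
  apply is_derive_adm_sum; intros n _; apply is_derive_mode_t.
Qed.

Lemma nth_deriv_Ysol_x t :
  exists D, (forall k, nth_deriv (fun y => Ysol hbar m0 c f y t) k (D k))
            /\ (forall k y, D k y = Ysol_dx k y t).
Proof.
  apply nth_deriv_chain.
  - intros y; rewrite Ysol_mode_sum; apply adm_sum_ext; intros n _; simpl; ring.
  - intros k y; apply is_derive_adm_sum; intros n _; apply is_derive_mode_x.
Qed.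

Lemma is_series_Ysol_equation x t :
  is_series
    (fun k => RtoC (E0 / 2 * (-1) ^ (k + 1) * gbinom (-1/2) k * l0 ^ (2 * k + 2))
              * Ysol_dx (2 * k + 2) x t)%C
    (Ci * RtoC hbar * Ysol_dt x t - RtoC E0 * Ysol hbar m0 c f x t)%C.
Proof.
  assert (Hlim : (Ci * RtoC hbar * Ysol_dt x t - RtoC E0 * Ysol hbar m0 c f x t)%C
                 = adm_sum l0 (fun n => RtoC (- hbar * mode_freq n - E0) * mode n x t)%C).
  { unfold Ysol_dt; rewrite Ysol_mode_sum.
    replace (Ci * RtoC hbar * _ - RtoC E0 * _)%C
      with (Ci * RtoC hbar * adm_sum l0 (fun n => Ci * RtoC (mode_freq n) * mode n x t)
            + RtoC (- E0) * adm_sum l0 (fun n => mode n x t))%C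
      by (rewrite RtoC_opp; ring).
    rewrite !adm_sum_mult_l, adm_sum_plus.
    apply adm_sum_ext; intros n _.
    rewrite RtoC_minus, RtoC_mult, !RtoC_opp.
    replace (Ci * RtoC hbar * (Ci * RtoC (mode_freq n) * mode n x t))%C
      with ((Ci * Ci) * RtoC hbar * RtoC (mode_freq n) * mode n x t)%C by ring.
    rewrite Ci_mul_Ci; ring. }
  rewrite Hlim; unfold Ysol_dx.
  eapply is_series_ext; [intros k; symmetry; rewrite adm_sum_mult_l; reflexivity|].
  apply is_series_adm_sum; intros n Hn.
  eapply is_series_ext; [|apply is_series_RtoC_mult_r, mode_dispersion, Hn].
  intros k; cbv beta; rewrite RtoC_mult; symmetry; apply Cmult_assoc.
Qed.

End Ysol_modes.

Theorem theorem2 (hbar m0 c : R) (f : nat -> C) :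
  0 < hbar -> 0 < m0 -> 0 < c ->
  let E0 := m0 * c ^ 2 in
  let l0 := hbar / (m0 * c) in
  let Y := Ysol hbar m0 c f in
  (* time derivative of Y exists everywhere *)
  (exists Yt : R -> R -> C,
     forall x t, is_derive_RC (fun s => Y x s) t (Yt x t) /\
     (* x-derivatives of all orders exist, and the series converges
        to the right-hand side of the equation *)
     exists D : nat -> R -> C,
       (forall k, nth_deriv (fun y => Y y t) k (D k)) /\
       is_series
         (fun k : nat =>
            (RtoC (E0 / 2 * (-1) ^ (k + 1) * gbinom (-1/2) k
                   * (hbar / (m0 * c)) ^ (2 * k + 2))
             * D (2 * k + 2)%nat x)%C)
         (Ci * RtoC hbar * Yt x t - RtoC E0 * Y x t)%C) /\
  (forall x, Y x 0 =
     adm_sum l0 (fun n => (f n * RtoC (exp (- INR n * x)%R))%C)).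
Proof.
  intros Hhbar Hm0 Hc; cbv zeta; split.
  - exists (Ysol_dt hbar m0 c f); intros x t.
    split; [apply is_derive_Ysol_t|].
    destruct (nth_deriv_Ysol_x hbar m0 c f t) as [D [HD HDdx]].
    exists D; split; [exact HD|].
    eapply is_series_ext; [intros k; symmetry; rewrite HDdx; reflexivity|].
    now apply is_series_Ysol_equation.
  - intros x; rewrite Ysol_mode_sum; apply adm_sum_ext; intros n _.
    unfold mode; rewrite Rmult_0_r, Cexp_imag_0; ring.
Qed.
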